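(* Let $s_1,s_2$ be prime powers and for $j=1,2$ let $D_j$ be a difference matrix $D(b_j,c_j,s_j)$ over the additive group of $\mathrm{GF}(s_j)$. Let $c_0$ be an integer with $1\le c_0\le\min(c_1,c_2)$, and partition $D_j=[D_{j0},D_{j1}]$ where $D_{j0}$ consists of the first $c_0$ columns. Write $\alpha_{i,k}$ for the $(i,k)$ entry of $D_1$ and $\beta_{j,k}$ for the $(j,k)$ entry of $D_2$. Let $D_0$ be the $b_1b_2\times c_0$ matrix with entries in $\mathrm{GF}(s_1)\times\mathrm{GF}(s_2)$ whose entry in row $(i-1)b_2+j$ and column $k$ is $(\alpha_{i,k},\beta_{j,k})$, for $1\le i\le b_1$, $1\le j\le b_2$, $1\le k\le c_0$. Let $D_{11}^*$ be the $b_1b_2\times(c_1-c_0)$ matrix whose row $(i-1)b_2+j$ is the $i$th row of $D_{11}$, and $D_{21}^*$ the $b_1b_2\times(c_2-c_0)$ matrix whose row $(i-1)b_2+j$ is the $j$th row of $D_{21}$. Then: (i) $D_0$ is a difference matrix $D(b_1b_2,c_0,s_1s_2)$ over the group $\mathrm{GF}(s_1)\times\mathrm{GF}(s_2)$ (addition componentwise); (ii) for $j=1,2$, $D_{j1}^*$ is a difference matrix $D(b_1b_2,c_j-c_0,s_j)$; (iii) for $j=1,2$, $[\sigma_j(D_0),D_{j1}^*]$ is a difference matrix $D(b_1b_2,c_j,s_j)$.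
   Context: A difference matrix $D(b,c,g)$ over an abelian group of order $g$ is a $b\times c$ array with entries in the group such that for any two distinct columns their entrywise difference contains every group element equally often. For a matrix whose entries are pairs, $\sigma_j$ denotes taking the $j$th component of every entry. *)

From HB Require Import structures.
From mathcomp Require Import all_boot all_order all_algebra all_field.
Set Implicit Arguments. Unset Strict Implicit. Unset Printing Implicit Defensive.
Import GRing.Theory.
Local Open Scope ring_scope.

(* The direct product of two finite abelian groups (componentwise addition)
   as a finZmodType (joins the existing pair zmodType and finType instances). *)
HB.instance Definition _ (U V : finZmodType) := GRing.Zmodule.on (U * V)%type.

(* A difference matrix D(b,c,g) over a finite abelian group G (g = #|G|):
   a b x c array such that for any two distinct columns k, l, the entrywise
   difference column D(.,k) - D(.,l) contains every group element equally
   often. *)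
Definition is_diff_matrix (G : finZmodType) (b c : nat) (D : 'M[G]_(b, c)) :=
  forall k l : 'I_c, k != l ->
  forall x y : G,
    #|[set i : 'I_b | D i k - D i l == x]| = #|[set i : 'I_b | D i k - D i l == y]|.

(* Row r = i*b2 + j (0-based) of a b1*b2-rowed matrix corresponds to (i, j). *)
Lemma rdiv_lt (b1 b2 : nat) (r : 'I_(b1 * b2)) : (r %/ b2 < b1)%N.
Proof.
case: r => r /=; case: b2 => [|b2]; first by rewrite muln0.
by move=> h; rewrite ltn_divLR.
Qed.

Lemma rmod_lt (b1 b2 : nat) (r : 'I_(b1 * b2)) : (r %% b2 < b2)%N.
Proof.
case: r => r /=; case: b2 => [|b2]; first by rewrite muln0.
by move=> _; rewrite ltn_pmod.
Qed.

Definition rdiv (b1 b2 : nat) (r : 'I_(b1 * b2)) : 'I_b1 := Ordinal (rdiv_lt r).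
Definition rmod (b1 b2 : nat) (r : 'I_(b1 * b2)) : 'I_b2 := Ordinal (rmod_lt r).

Definition firstcols (T : Type) (b c c0 : nat) (h : (c0 <= c)%N) (D : 'M[T]_(b, c))
  : 'M[T]_(b, c0) := lsubmx (castmx (erefl b, esym (subnKC h)) D).
Definition lastcols (T : Type) (b c c0 : nat) (h : (c0 <= c)%N) (D : 'M[T]_(b, c))
  : 'M[T]_(b, c - c0) := rsubmx (castmx (erefl b, esym (subnKC h)) D).

Definition D0mx (T1 T2 : Type) (b1 b2 c1 c2 c0 : nat)
  (h1 : (c0 <= c1)%N) (h2 : (c0 <= c2)%N)
  (D1 : 'M[T1]_(b1, c1)) (D2 : 'M[T2]_(b2, c2)) : 'M[T1 * T2]_(b1 * b2, c0) :=
  \matrix_(r, k) (firstcols h1 D1 (rdiv r) k, firstcols h2 D2 (rmod r) k).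

Definition D1star (T : Type) (b1 b2 c1 c0 : nat) (h1 : (c0 <= c1)%N)
  (D1 : 'M[T]_(b1, c1)) : 'M[T]_(b1 * b2, c1 - c0) :=
  \matrix_(r, k) lastcols h1 D1 (rdiv r) k.
Definition D2star (T : Type) (b1 b2 c2 c0 : nat) (h2 : (c0 <= c2)%N)
  (D2 : 'M[T]_(b2, c2)) : 'M[T]_(b1 * b2, c2 - c0) :=
  \matrix_(r, k) lastcols h2 D2 (rmod r) k.

From HB Require Import structures.
From mathcomp Require Import all_boot all_order all_algebra all_field.

(* Column selection preserves difference matrices: the difference columns of
   a column submatrix are among those of the whole matrix.  For the row
   blow-up, r |-> (r %/ b2, r %% b2) is a bijection onto 'I_b1 * 'I_b2, so the
   number of rows of D_0 whose difference in columns k, l is (x1, x2) is the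
   product of the corresponding counts in D1 and D2, and for the blow-up of D1
   alone it is b2 times the count in D1; neither depends on the difference.
   Finally [sigma_1(D_0), D_11^*] is, up to a cast, the blow-up of D1 itself,
   so (iii) is again the blow-up case. *)

Section DiffMatrixColumns.
Variables (G : finZmodType) (b : nat).

Lemma diff_matrix_colsub c c' (g : 'I_c' -> 'I_c) (D : 'M[G]_(b, c)) :
  injective g -> is_diff_matrix D -> is_diff_matrix (colsub g D).
Proof.
move=> g_inj hD k l kl x y.
have colsubE z : [set i | (colsub g D i k - colsub g D i l)%R == z]
               = [set i | (D i (g k) - D i (g l))%R == z].
  by apply/setP => i; rewrite !inE !mxE.
by rewrite !colsubE; apply: hD; rewrite (inj_eq g_inj).
Qed.

Lemma diff_matrix_castmx_cols c c' (eq_c : c = c') (D : 'M[G]_(b, c)) :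
  is_diff_matrix D -> is_diff_matrix (castmx (erefl b, eq_c) D).
Proof.
by rewrite -[eq_c]esymK -colsub_cast; apply/diff_matrix_colsub/cast_ord_inj.
Qed.

Lemma diff_matrix_lsubmx c c' (D : 'M[G]_(b, c + c')) :
  is_diff_matrix D -> is_diff_matrix (lsubmx D).
Proof. by rewrite lsubmxEsub; apply/diff_matrix_colsub/lshift_inj. Qed.

Lemma diff_matrix_rsubmx c c' (D : 'M[G]_(b, c + c')) :
  is_diff_matrix D -> is_diff_matrix (rsubmx D).
Proof. by rewrite rsubmxEsub; apply/diff_matrix_colsub/rshift_inj. Qed.

Variables (c c0 : nat) (h : c0 <= c).

Lemma diff_matrix_firstcols (D : 'M[G]_(b, c)) :
  is_diff_matrix D -> is_diff_matrix (firstcols h D).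
Proof. by move=> hD; apply/diff_matrix_lsubmx/diff_matrix_castmx_cols. Qed.

Lemma diff_matrix_lastcols (D : 'M[G]_(b, c)) :
  is_diff_matrix D -> is_diff_matrix (lastcols h D).
Proof. by move=> hD; apply/diff_matrix_rsubmx/diff_matrix_castmx_cols. Qed.

End DiffMatrixColumns.

Lemma row_mx_firstcols_lastcols (T : Type) b c c0 (h : c0 <= c)
    (D : 'M[T]_(b, c)) :
  castmx (erefl b, subnKC h) (row_mx (firstcols h D) (lastcols h D)) = D.
Proof. by rewrite hsubmxK castmxKV. Qed.

Lemma rowsub_row_mx (T : Type) m m' n1 n2 (f : 'I_m' -> 'I_m)
    (A : 'M[T]_(m, n1)) (B : 'M[T]_(m, n2)) :
  rowsub f (row_mx A B) = row_mx (rowsub f A) (rowsub f B).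
Proof. by apply/matrixP => i j; rewrite !mxE; case: split => k; rewrite mxE. Qed.

Lemma castmx_cols_rowsub (T : Type) m m' n n' (eq_n : n = n')
    (f : 'I_m' -> 'I_m) (A : 'M[T]_(m, n)) :
  castmx (erefl m', eq_n) (rowsub f A) = rowsub f (castmx (erefl m, eq_n) A).
Proof. by case: n' / eq_n; rewrite !castmx_id. Qed.

Section RowBlowUp.
Variables b1 b2 : nat.

Definition rsplit (r : 'I_(b1 * b2)) := (rdiv r, rmod r).

Lemma rsplit_inj : injective rsplit.
Proof.
move=> r r' [eq_div eq_mod].
by apply: val_inj; rewrite [LHS](divn_eq _ b2) [RHS](divn_eq _ b2) eq_div eq_mod.
Qed.

Lemma rsplit_bij : bijective rsplit.
Proof. by apply: (inj_card_bij rsplit_inj); rewrite card_prod !card_ord. Qed.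

Lemma card_rdiv_rmod (P : {set 'I_b1}) (Q : {set 'I_b2}) :
  #|[set r | (rdiv r \in P) && (rmod r \in Q)]| = #|P| * #|Q|.
Proof.
rewrite -cardsX -(on_card_preimset (onW_bij _ rsplit_bij)).
by apply: eq_card => r; rewrite !inE.
Qed.

Variable c : nat.

Lemma diff_matrix_pair_rows (G1 G2 : finZmodType)
    (A : 'M[G1]_(b1, c)) (B : 'M[G2]_(b2, c)) :
  is_diff_matrix A -> is_diff_matrix B ->
  is_diff_matrix (\matrix_(r, k) (A (rdiv r) k, B (rmod r) k)
                  : 'M[G1 * G2]_(b1 * b2, c)).
Proof.
move=> hA hB; set M := (X in is_diff_matrix X) => k l kl [x1 x2] [y1 y2].
have countE z1 z2 : #|[set r | (M r k - M r l)%R == (z1, z2)]|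
    = #|[set i | (A i k - A i l)%R == z1]| * #|[set j | (B j k - B j l)%R == z2]|.
  by rewrite -card_rdiv_rmod; apply: eq_card => r; rewrite !inE !mxE.
by rewrite !countE (hA k l kl x1 y1) (hB k l kl x2 y2).
Qed.

Lemma diff_matrix_rowsub_rdiv (G : finZmodType) (A : 'M[G]_(b1, c)) :
  is_diff_matrix A -> is_diff_matrix (rowsub (@rdiv b1 b2) A).
Proof.
move=> hA; set M := (X in is_diff_matrix X) => k l kl x y.
have countE z : #|[set r | (M r k - M r l)%R == z]|
              = #|[set i | (A i k - A i l)%R == z]| * #|[set: 'I_b2]|.
  by rewrite -card_rdiv_rmod; apply: eq_card => r; rewrite !inE !mxE andbT.
by rewrite !countE (hA k l kl x y).
Qed.

Lemma diff_matrix_rowsub_rmod (G : finZmodType) (B : 'M[G]_(b2, c)) :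
  is_diff_matrix B -> is_diff_matrix (rowsub (@rmod b1 b2) B).
Proof.
move=> hB; set M := (X in is_diff_matrix X) => k l kl x y.
have countE z : #|[set r | (M r k - M r l)%R == z]|
              = #|[set: 'I_b1]| * #|[set j | (B j k - B j l)%R == z]|.
  by rewrite -card_rdiv_rmod; apply: eq_card => r; rewrite !inE !mxE.
by rewrite !countE (hB k l kl x y).
Qed.

End RowBlowUp.

Theorem lemma7 (F1 F2 : finFieldType) (b1 b2 c1 c2 c0 : nat)
  (D1 : 'M[F1]_(b1, c1)) (D2 : 'M[F2]_(b2, c2))
  (hD1 : is_diff_matrix D1) (hD2 : is_diff_matrix D2)
  (hc0 : (1 <= c0)%N) (h1 : (c0 <= c1)%N) (h2 : (c0 <= c2)%N) :
  let D0 := D0mx h1 h2 D1 D2 in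
  let D11s := D1star b2 h1 D1 in
  let D21s := D2star b1 h2 D2 in
  [/\ is_diff_matrix D0,
      is_diff_matrix D11s /\ is_diff_matrix D21s &
      is_diff_matrix (castmx (erefl (b1 * b2)%N, subnKC h1) (row_mx (map_mx fst D0) D11s))
      /\ is_diff_matrix (castmx (erefl (b1 * b2)%N, subnKC h2) (row_mx (map_mx snd D0) D21s))].
Proof.
move=> D0 D11s D21s.
have D11sE : D11s = rowsub (@rdiv b1 b2) (lastcols h1 D1).
  by apply/matrixP => r k; rewrite !mxE.
have D21sE : D21s = rowsub (@rmod b1 b2) (lastcols h2 D2).
  by apply/matrixP => r k; rewrite !mxE.
have D01E : map_mx fst D0 = rowsub (@rdiv b1 b2) (firstcols h1 D1).
  by apply/matrixP => r k; rewrite !mxE.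
have D02E : map_mx snd D0 = rowsub (@rmod b1 b2) (firstcols h2 D2).
  by apply/matrixP => r k; rewrite !mxE.
rewrite D11sE D21sE D01E D02E -!rowsub_row_mx !castmx_cols_rowsub.
rewrite !row_mx_firstcols_lastcols.
split.
- by apply: diff_matrix_pair_rows; apply: diff_matrix_firstcols.
- by split; [apply: diff_matrix_rowsub_rdiv | apply: diff_matrix_rowsub_rmod];
    apply: diff_matrix_lastcols.
- by split; [apply: diff_matrix_rowsub_rdiv | apply: diff_matrix_rowsub_rmod].
Qed.
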